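(* Consider a discounted MDP with finite state space $\mathcal{S}$, finite action space $\mathcal{A}$, reward vector $r$, transition matrix $P$ with $P_{sa,\tilde s}=\Pr(\tilde s\mid s,a)$, initial state distribution $\mu_0$ with full support, and discount $\gamma\in[0,1)$. Let $\theta\mapsto\pi_\theta$ be a differentiable parametrized policy with $\pi_\theta(s,a)>0$ for all $(s,a)$, and let the critic be directly parametrized by $q\in\mathbb{R}^{|\mathcal{S}||\mathcal{A}|}$. Let $\Psi_\theta=I-\gamma P\Pi_\theta$, $D_\theta=\Delta(d_\theta)$, $\delta_\theta=r-\Psi_\theta q$ and $J_\pi(\theta,q)=(1-\gamma)\mu_0^\top\Pi_\theta q$. Define the semi-gradient quantities: $\partial_q^{\mathrm{semi}}J_q=-D_\theta\delta_\theta$ (a function of $(\theta,q)$); the semi-Hessian $(\partial_q^{\mathrm{semi}})^2J_q=D_\theta$; the semi-derivative $\partial_q^{\mathrm{semi}}J_\pi=d_\theta$; and let $\partial_\theta\partial_q^{\mathrm{semi}}J_q$ be the Jacobian in $\theta$ of $-D_\theta\delta_\theta$ at fixed $q$ (derivative through both $D_\theta$ and $\delta_\theta$). Define $$g^{\mathrm{semi}}_{S,\theta}=\partial_\theta J_\pi-(\partial_\theta\partial_q^{\mathrm{semi}}J_q)^\top\big((\partial_q^{\mathrm{semi}})^2J_q\big)^{-1}(\partial_q^{\mathrm{semi}}J_\pi).$$ Then for every $q$, $g^{\mathrm{semi}}_{S,\theta}=\partial_\theta J_\pi+\nabla_\theta(d_\theta^\top\delta_\theta)=\nabla_\theta J(\theta)$,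 where $J(\theta)=(1-\gamma)\mu_0^\top\Pi_\theta q_\theta$.
   Context: $\pi_\theta\in\mathbb{R}_+^{|\mathcal{S}||\mathcal{A}|}$ has entries $\pi_\theta(s,a)$, normalized in each state. $\Pi_\theta\in\mathbb{R}^{|\mathcal{S}|\times|\mathcal{S}||\mathcal{A}|}$ is block-diagonal with row $s$ containing $\pi_\theta(s,\cdot)^\top$, so $(\Pi_\theta v)(s)=\sum_a\pi_\theta(s,a)v(s,a)$. $q_\theta=\sum_{i\ge0}(\gamma P\Pi_\theta)^i r$. $d_\theta(s,a)=(1-\gamma)\sum_{i\ge0}\gamma^i\Pr(S_i=s,A_i=a)$ is the discounted state-action visitation distribution under $S_0\sim\mu_0$, policy $\pi_\theta$ and transitions $P$; $\Delta(v)$ is the diagonal matrix with diagonal $v$. $\partial_\theta J_\pi$ is the gradient of $J_\pi$ in $\theta$ at fixed $q$. (The semi-gradient quantities arise from the on-policy critic loss $\tfrac12\|r+\gamma P\Pi_\theta q-q\|^2_{d_\theta}$ and the identity $J_\pi=d_\theta^\top(q-q')$, $q'=r+\gamma P\Pi_\theta q$, by not differentiating through the target $q'$.) *)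

From HB Require Import structures.
From mathcomp Require Import all_boot all_order all_algebra.
From mathcomp Require Import all_classical all_reals all_analysis.
Set Implicit Arguments. Unset Strict Implicit. Unset Printing Implicit Defensive.
Import Order.TTheory GRing.Theory Num.Theory.
Import numFieldNormedType.Exports.
Local Open Scope ring_scope.

(* Vectors in R^{|S||A|} are represented as functions S -> A -> R,
   vectors in R^{|S|} as functions S -> R.
   P s a s' = Pr(s' | s, a);  pi s a = pi(s,a). *)

Section MDP.
Variables (R : realType) (S A : finType).

Definition PiOp (pi : S -> A -> R) (v : S -> A -> R) : S -> R :=
  fun s => \sum_(a : A) pi s a * v s a.

Definition POp (P : S -> A -> S -> R) (w : S -> R) : S -> A -> R :=
  fun s a => \sum_(s' : S) P s a s' * w s'.

Definition gPPi (gamma : R) (P : S -> A -> S -> R) (pi : S -> A -> R)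
  (v : S -> A -> R) : S -> A -> R :=
  fun s a => gamma * POp P (PiOp pi v) s a.

Definition qval (gamma : R) (P : S -> A -> S -> R) (pi : S -> A -> R)
  (r : S -> A -> R) : S -> A -> R :=
  fun s a => limn (series (fun i => iter i (gPPi gamma P pi) r s a)).

Fixpoint stateDist (mu0 : S -> R) (P : S -> A -> S -> R) (pi : S -> A -> R)
  (i : nat) : S -> R :=
  match i with
  | 0 => mu0
  | i'.+1 => fun s' => \sum_(s : S) \sum_(a : A)
      stateDist mu0 P pi i' s * pi s a * P s a s'
  end.

Definition saProb (mu0 : S -> R) (P : S -> A -> S -> R) (pi : S -> A -> R)
  (i : nat) (s : S) (a : A) : R := stateDist mu0 P pi i s * pi s a.

Definition dvis (gamma : R) (mu0 : S -> R) (P : S -> A -> S -> R)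
  (pi : S -> A -> R) : S -> A -> R :=
  fun s a => (1 - gamma) *
    limn (series (fun i => gamma ^+ i * saProb mu0 P pi i s a)).

Definition tdres (gamma : R) (P : S -> A -> S -> R) (pi : S -> A -> R)
  (r q : S -> A -> R) : S -> A -> R :=
  fun s a => r s a - (q s a - gPPi gamma P pi q s a).

Definition Jpi (gamma : R) (mu0 : S -> R) (pi : S -> A -> R)
  (q : S -> A -> R) : R :=
  (1 - gamma) * \sum_(s : S) mu0 s * PiOp pi q s.

End MDP.

Definition ebasis (R : realType) (k : nat) (i : 'I_k) : 'rV[R]_k := delta_mx 0 i.

(* Weighted by the discounted state occupancy, the series defining d_θ telescopes along
   the Markov chain, so that d_θ^T (I - γ P Π_θ) v = (1 - γ) μ0^T Π_θ v for every v.
   Since q_θ solves the Bellman equation (I - γ P Π_θ) q_θ = r, this gives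
   J(θ) = J_π(θ, q) + d_θ^T δ_θ for every fixed q, and differentiating yields the second
   equality.  The first one only uses D_θ^{-1} d_θ = 1, as d_θ > 0 when μ0 has full
   support.  Both need d_θ to be differentiable in θ: the state occupancy is the row
   vector μ0^T (I - γ Π_θ P)^{-1}, the matrix being invertible because Π_θ P is
   stochastic and γ < 1, and Cramer's rule expresses its inverse through determinants,
   i.e. polynomials in the entries of π_θ. *)

From mathcomp Require Import all_boot all_order all_algebra.
From mathcomp Require Import all_classical all_reals all_analysis.
From mathcomp Require Import ring.
Set Implicit Arguments. Unset Strict Implicit. Unset Printing Implicit Defensive.
Import Order.TTheory GRing.Theory Num.Theory.
Import numFieldNormedType.Exports.
Local Open Scope classical_set_scope.
Local Open Scope ring_scope.

Section BigSumDifferentiable.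
Variables (R : numFieldType) (V W : normedModType R) (x : V).

Lemma differentiable_big_sum (I : Type) (r : seq I) (P : pred I) (F : I -> V -> W) :
  (forall i, P i -> differentiable (F i) x) ->
  differentiable (fun y => \sum_(i <- r | P i) F i y) x.
Proof.
move=> dF; rewrite -fct_sumE.
by elim/big_ind: _ => // f g; exact: differentiableD.
Qed.

Lemma derive_big_sum (I : Type) (r : seq I) (F : I -> V -> W) (v : V) :
  (forall i, derivable (F i) x v) ->
  'D_v (fun y => \sum_(i <- r) F i y) x = \sum_(i <- r) 'D_v (F i) x.
Proof.
move=> dF; rewrite -fct_sumE; apply: derive_val.
elim/big_ind2: _ => [|f df g dg|i _]; [exact: is_derive_cst | exact: is_deriveD |].
exact: derivableP.
Qed.

End BigSumDifferentiable.

Section MatrixDifferentiable.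
Variables (R : numFieldType) (V : normedModType R) (x : V).

Lemma differentiable_big_prod (I : Type) (r : seq I) (P : pred I) (F : I -> V -> R) :
  (forall i, P i -> differentiable (F i) x) ->
  differentiable (fun y => \prod_(i <- r | P i) F i y) x.
Proof.
move=> dF; rewrite -fct_prodE.
by elim/big_ind: _ => // f g; exact: differentiableM.
Qed.

Lemma differentiable_det n (M : V -> 'M[R]_n) :
  (forall i j, differentiable (fun y => M y i j) x) ->
  differentiable (fun y => \det (M y)) x.
Proof.
move=> dM; apply: differentiable_big_sum => s _.
apply: differentiableM; first exact: differentiable_cst.
by apply: differentiable_big_prod => i _.
Qed.

Lemma differentiable_invmx n (M : V -> 'M[R]_n) :
  (forall y, M y \in unitmx) -> (forall i j, differentiable (fun y => M y i j) x) ->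
  forall i j, differentiable (fun y => invmx (M y) i j) x.
Proof.
move=> M_unit dM i j.
have -> : (fun y => invmx (M y) i j) =
          (fun y => (\det (M y))^-1 * ((-1) ^+ (j + i) * \det (row' j (col' i (M y))))).
  by apply/funext => y; rewrite /invmx M_unit !mxE.
apply: differentiableM.
  by apply: differentiableV; [exact: differentiable_det | rewrite -unitfE -unitmxE].
apply: differentiableM; first exact: differentiable_cst.
apply: differentiable_det => a b; under eq_fun do rewrite !mxE.
exact: dM.
Qed.

End MatrixDifferentiable.

Lemma cvgn_sum (R : numFieldType) (V : normedModType R) (I : Type) (r : seq I)
    (u : I -> nat -> V) (l : I -> V) :
  (forall i, u i n @[n --> \oo] --> l i) ->
  \sum_(i <- r) u i n @[n --> \oo] --> \sum_(i <- r) l i.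
Proof. by move=> cu; apply: cvg_big => //; exact: add_continuous. Qed.

Section MDP.
Variables (R : realType) (S A : finType).
Variables (P : S -> A -> S -> R) (mu0 : S -> R) (gamma : R).
Hypotheses (P_ge0 : forall s a s', 0 <= P s a s') (P_sum1 : forall s a, \sum_s' P s a s' = 1).
Hypotheses (mu0_ge0 : forall s, 0 <= mu0 s) (mu0_sum1 : \sum_s mu0 s = 1).
Hypotheses (gamma_ge0 : 0 <= gamma) (gamma_lt1 : gamma < 1).

Section FixedPolicy.
Variable p : S -> A -> R.
Hypotheses (p_ge0 : forall s a, 0 <= p s a) (p_sum1 : forall s, \sum_a p s a = 1).

Local Notation rho := (stateDist mu0 P p).

Definition PiP (s s' : S) : R := \sum_a p s a * P s a s'.

Lemma PiP_ge0 s s' : 0 <= PiP s s'.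
Proof. by rewrite sumr_ge0 // => a _; rewrite mulr_ge0. Qed.

Lemma PiP_sum1 s : \sum_s' PiP s s' = 1.
Proof.
rewrite exchange_big /= -(p_sum1 s); apply: eq_bigr => a _.
by rewrite -mulr_sumr P_sum1 mulr1.
Qed.

Lemma stateDistS i s' : rho i.+1 s' = \sum_s rho i s * PiP s s'.
Proof. by apply: eq_bigr => s _; rewrite mulr_sumr; apply: eq_bigr => a _; rewrite mulrA. Qed.

Lemma stateDist_ge0 i s : 0 <= rho i s.
Proof.
elim: i s => [|i IH] s; first exact: mu0_ge0.
by rewrite stateDistS sumr_ge0 // => s0 _; rewrite mulr_ge0 ?PiP_ge0.
Qed.

Lemma stateDist_sum1 i : \sum_s rho i s = 1.
Proof.
elim: i => [|i IH]; first exact: mu0_sum1.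
under eq_bigr do rewrite stateDistS.
rewrite exchange_big /= -IH; apply: eq_bigr => s _.
by rewrite -mulr_sumr PiP_sum1 mulr1.
Qed.

Lemma stateDist_le1 i s : rho i s <= 1.
Proof.
rewrite -(stateDist_sum1 i) (bigD1 s) //= lerDl.
by rewrite sumr_ge0 // => s0 _; exact: stateDist_ge0.
Qed.

Definition occupancy (s : S) : R := limn (series (fun i => gamma ^+ i * rho i s)).

Lemma occupancy_cvg s : series (fun i => gamma ^+ i * rho i s) @ \oo --> occupancy s.
Proof.
apply: (@series_le_cvg _ _ (geometric 1 gamma)) => [n|n|n|].
- by rewrite mulr_ge0 ?exprn_ge0 ?stateDist_ge0.
- exact: geometric_ge0.
- by rewrite /= mul1r ler_piMr ?exprn_ge0 ?stateDist_le1.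
- by apply: is_cvg_geometric_series; rewrite ger0_norm.
Qed.

Lemma dvisE s a : dvis gamma mu0 P p s a = (1 - gamma) * (p s a * occupancy s).
Proof.
rewrite /dvis /saProb; congr (_ * _); apply: cvg_lim => //.
have -> : series (fun i => gamma ^+ i * (rho i s * p s a)) =
          (fun n => series (fun i => gamma ^+ i * rho i s) n * p s a).
  by apply/funext => n; rewrite !seriesEnat /= mulr_suml; apply: eq_bigr => i _; rewrite mulrA.
by rewrite mulrC; apply: cvgMr_tmp; exact: occupancy_cvg.
Qed.

Lemma occupancy_ge_mu0 s : mu0 s <= occupancy s.
Proof.
have incr : {homo series (fun i => gamma ^+ i * rho i s) : n m / (n <= m)%N >-> n <= m}.
  apply: nondecreasing_series => n _ _.
  by rewrite mulr_ge0 ?exprn_ge0 ?stateDist_ge0.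
have := nondecreasing_cvgn_le incr (@occupancy_cvg s) 1.
by rewrite seriesEnat /= big_nat1 expr0 mul1r.
Qed.

Lemma dvis_gt0 s a : 0 < mu0 s -> 0 < p s a -> 0 < dvis gamma mu0 P p s a.
Proof.
move=> mu0_gt0 p_gt0; rewrite dvisE mulr_gt0 ?subr_gt0 ?mulr_gt0 //.
exact: lt_le_trans mu0_gt0 (occupancy_ge_mu0 s).
Qed.

Lemma occupancy_fixpoint s' :
  occupancy s' = mu0 s' + gamma * \sum_s occupancy s * PiP s s'.
Proof.
have partialS n : series (fun i => gamma ^+ i * rho i s') n.+1 =
    mu0 s' + gamma * \sum_s series (fun i => gamma ^+ i * rho i s) n * PiP s s'.
  rewrite seriesEnat /= big_nat_recl // expr0 mul1r; congr (_ + _).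
  under [in RHS]eq_bigr do rewrite seriesEnat /= mulr_suml.
  rewrite exchange_big /= mulr_sumr; apply: eq_bigr => i _.
  change (gamma ^+ i.+1 * rho i.+1 s' = gamma * \sum_s gamma ^+ i * rho i s * PiP s s').
  rewrite stateDistS exprS -mulrA !mulr_sumr; apply: eq_bigr => s _.
  by rewrite !mulrA.
have := @occupancy_cvg s'; rewrite -cvg_shiftS /=.
under eq_cvg do rewrite partialS.
move=> /(cvg_unique (@Rhausdorff R)); apply.
apply: cvgD; first exact: cvg_cst.
by apply: cvgMl_tmp; apply: cvgn_sum => s; apply: cvgMr_tmp; exact: occupancy_cvg.
Qed.

Definition stepExp (i : nat) (v : S -> A -> R) : R := \sum_s rho i s * PiOp p v s.

Lemma PiOp_gPPi v s :
  PiOp p (gPPi gamma P p v) s = gamma * \sum_s' PiP s s' * PiOp p v s'.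
Proof.
rewrite /PiOp /gPPi /POp /PiP; under eq_bigr do rewrite mulrCA mulr_sumr.
rewrite -mulr_sumr exchange_big /=; congr (_ * _); apply: eq_bigr => s' _.
by rewrite mulr_suml; apply: eq_bigr => a _; rewrite mulrA.
Qed.

Lemma stepExp_gPPi i v : stepExp i (gPPi gamma P p v) = gamma * stepExp i.+1 v.
Proof.
rewrite /stepExp; under [in RHS]eq_bigr do rewrite stateDistS mulr_suml.
rewrite exchange_big mulr_sumr; apply: eq_bigr => s _.
rewrite PiOp_gPPi mulrCA !mulr_sumr; apply: eq_bigr => s' _.
by rewrite !mulrA.
Qed.

Lemma occupancy_PiOp_Psi v :
  \sum_s occupancy s * PiOp p (fun s a => v s a - gPPi gamma P p v s a) s = stepExp 0 v.
Proof.
set w := fun s a => v s a - gPPi gamma P p v s a.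
have stepExp_w i : stepExp i w = stepExp i v - gamma * stepExp i.+1 v.
  rewrite -stepExp_gPPi /stepExp -sumrB; apply: eq_bigr => s _.
  by rewrite -mulrBr /PiOp -sumrB; congr (_ * _); apply: eq_bigr => a _; rewrite mulrBr.
have partial n : \sum_s series (fun i => gamma ^+ i * rho i s) n * PiOp p w s =
                 stepExp 0 v - gamma ^+ n * stepExp n v.
  transitivity (\sum_(0 <= i < n) gamma ^+ i * stepExp i w).
    under eq_bigr do rewrite seriesEnat /= mulr_suml.
    rewrite exchange_big; apply: eq_bigr => i _ /=.
    by rewrite /stepExp mulr_sumr; apply: eq_bigr => s _; rewrite mulrA.
  transitivity (- \sum_(0 <= i < n)
                  (gamma ^+ i.+1 * stepExp i.+1 v - gamma ^+ i * stepExp i v)).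
    by rewrite -sumrN; apply: eq_bigr => i _; rewrite stepExp_w exprS; ring.
  by rewrite telescope_sumr // expr0 mul1r opprB.
have lhs_cvg : stepExp 0 v - gamma ^+ n * stepExp n v
                 @[n --> \oo] --> \sum_s occupancy s * PiOp p w s.
  under eq_cvg do rewrite -partial.
  by apply: cvgn_sum => s; apply: cvgMr_tmp; exact: occupancy_cvg.
have rhs_cvg : stepExp 0 v - gamma ^+ n * stepExp n v @[n --> \oo] --> stepExp 0 v.
  rewrite -[X in _ --> X]subr0; apply: cvgB; first exact: cvg_cst.
  have -> : (fun n => gamma ^+ n * stepExp n v) =
            (fun n => \sum_s gamma ^+ n * rho n s * PiOp p v s).
    by apply/funext => n; rewrite /stepExp mulr_sumr; apply: eq_bigr => s _; rewrite mulrA.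
  rewrite [X in _ --> X](_ : _ = \sum_s 0 * PiOp p v s); last first.
    by rewrite big1 // => s _; rewrite mul0r.
  apply: cvgn_sum => s; apply: cvgMr_tmp.
  exact: cvg_series_cvg_0 (@occupancy_cvg s).
by rewrite (cvg_unique (@Rhausdorff R) lhs_cvg rhs_cvg).
Qed.

Lemma dvis_Psi v :
  \sum_s \sum_a dvis gamma mu0 P p s a * (v s a - gPPi gamma P p v s a) =
  Jpi gamma mu0 p v.
Proof.
rewrite /Jpi -[\sum_s mu0 s * _]/(stepExp 0 v) -occupancy_PiOp_Psi mulr_sumr.
apply: eq_bigr => s _; rewrite /PiOp !mulr_sumr; apply: eq_bigr => a _.
by rewrite dvisE; ring.
Qed.

Lemma gPPiE v s a :
  gPPi gamma P p v s a = \sum_s' \sum_a' gamma * P s a s' * p s' a' * v s' a'.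
Proof.
rewrite /gPPi /POp /PiOp mulr_sumr; apply: eq_bigr => s' _.
by rewrite !mulr_sumr; apply: eq_bigr => a' _; rewrite !mulrA.
Qed.

Lemma gPPi_norm_le c v : (forall s a, `|v s a| <= c) ->
  forall s a, `|gPPi gamma P p v s a| <= gamma * c.
Proof.
move=> v_le s a; rewrite /gPPi /POp /PiOp normrM ger0_norm // ler_wpM2l //.
apply: le_trans (ler_norm_sum _ _ _) _.
rewrite -[leRHS]mul1r -(P_sum1 s a) mulr_suml; apply: ler_sum => s' _.
rewrite normrM ger0_norm // ler_wpM2l //.
apply: le_trans (ler_norm_sum _ _ _) _.
rewrite -[leRHS]mul1r -(p_sum1 s') mulr_suml; apply: ler_sum => a' _.
by rewrite normrM ger0_norm // ler_wpM2l.
Qed.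

Lemma iter_gPPi_norm_le r i s a :
  `|iter i (gPPi gamma P p) r s a| <= gamma ^+ i * \sum_s0 \sum_a0 `|r s0 a0|.
Proof.
elim: i s a => [|i IH] s a /=.
  rewrite expr0 mul1r (bigD1 s) //= (bigD1 a) //= -addrA lerDl.
  by rewrite addr_ge0 ?sumr_ge0 // => s0 _; rewrite sumr_ge0.
by rewrite exprS -mulrA; apply: gPPi_norm_le.
Qed.

Lemma qval_cvg r s a :
  series (fun i => iter i (gPPi gamma P p) r s a) @ \oo --> qval gamma P p r s a.
Proof.
apply: normed_cvg.
apply: (@series_le_cvg _ _ (geometric (\sum_s0 \sum_a0 `|r s0 a0|) gamma)) => [n|n|n|].
- exact: normr_ge0.
- by apply: geometric_ge0 => //; do 2 apply: sumr_ge0 => ? _.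
- by rewrite /= mulrC; exact: iter_gPPi_norm_le.
- by apply: is_cvg_geometric_series; rewrite ger0_norm.
Qed.

Lemma qval_bellman r s a :
  qval gamma P p r s a = r s a + gPPi gamma P p (qval gamma P p r) s a.
Proof.
have partialS n : series (fun i => iter i (gPPi gamma P p) r s a) n.+1 =
    r s a + \sum_s' \sum_a' gamma * P s a s' * p s' a' *
                           series (fun i => iter i (gPPi gamma P p) r s' a') n.
  rewrite seriesEnat /= big_nat_recl //; congr (_ + _).
  under eq_bigr do rewrite iterS gPPiE.
  rewrite exchange_big; apply: eq_bigr => s' _ /=.
  rewrite exchange_big; apply: eq_bigr => a' _ /=.
  by rewrite seriesEnat mulr_sumr.
have := @qval_cvg r s a; rewrite -cvg_shiftS /=.
under eq_cvg do rewrite partialS.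
move=> /(cvg_unique (@Rhausdorff R)); apply.
apply: cvgD; first exact: cvg_cst.
rewrite gPPiE; apply: cvgn_sum => s'; apply: cvgn_sum => a'.
by apply: cvgMl_tmp; exact: qval_cvg.
Qed.

Lemma Jpi_qval r q :
  Jpi gamma mu0 p (qval gamma P p r) =
  Jpi gamma mu0 p q + \sum_s \sum_a dvis gamma mu0 P p s a * tdres gamma P p r q s a.
Proof.
rewrite -!dvis_Psi -big_split; apply: eq_bigr => s _.
rewrite -big_split; apply: eq_bigr => a _ /=.
by rewrite /tdres (qval_bellman r s a); ring.
Qed.

Definition PiP_mx : 'M[R]_#|S| := \matrix_(i, j) PiP (enum_val i) (enum_val j).

Definition IgPiP_mx : 'M[R]_#|S| := 1%:M - gamma *: PiP_mx.

Lemma norm1_mulmx_PiP (x : 'rV[R]_#|S|) :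
  \sum_j `|(x *m PiP_mx) 0 j| <= \sum_j `|x 0 j|.
Proof.
apply: (@le_trans _ _ (\sum_j \sum_i `|x 0 i| * PiP_mx i j)).
  apply: ler_sum => j _; rewrite mxE; apply: le_trans (ler_norm_sum _ _ _) _.
  by apply: ler_sum => i _; rewrite normrM mxE (ger0_norm (PiP_ge0 _ _)).
rewrite exchange_big /=; apply: ler_sum => i _.
under eq_bigr do rewrite mxE.
by rewrite -mulr_sumr -(big_enum_val (PiP (enum_val i))) PiP_sum1 mulr1.
Qed.

Lemma IgPiP_mx_unit : IgPiP_mx \in unitmx.
Proof.
rewrite -row_free_unit -kermx_eq0; apply/eqP/row_matrixP => k; rewrite row0.
set x := row k _; have : x *m IgPiP_mx = 0 by rewrite -row_mul mulmx_ker row0.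
rewrite mulmxBr mulmx1 -scalemxAr => /eqP; rewrite subr_eq0 => /eqP x_fix.
pose N := \sum_j `|x 0 j|.
have N_ge0 : 0 <= N by apply: sumr_ge0 => j _.
have N_le : N <= gamma * N.
  rewrite {1}/N {1}x_fix.
  under eq_bigr do rewrite mxE normrM (ger0_norm gamma_ge0).
  by rewrite -mulr_sumr ler_wpM2l // norm1_mulmx_PiP.
have N0 : N = 0.
  have : (1 - gamma) * N <= 0 by rewrite mulrBl mul1r subr_le0.
  by rewrite pmulr_rle0 ?subr_gt0 // => N_le0; apply/eqP; rewrite eq_le N_le0.
apply/rowP => j; rewrite [RHS]mxE; apply: normr0_eq0.
by apply: (psumr_eq0P _ N0) => // i _.
Qed.

Lemma occupancy_mulmx :
  (\row_j occupancy (enum_val j)) *m IgPiP_mx = \row_j mu0 (enum_val j).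
Proof.
apply/rowP => j; rewrite /IgPiP_mx mulmxBr mulmx1 -scalemxAr !mxE occupancy_fixpoint.
rewrite (big_enum_val (fun s => occupancy s * PiP s (enum_val j))) /=.
by under [X in _ - gamma * X]eq_bigr do rewrite !mxE; rewrite addrK.
Qed.

Lemma occupancy_invmx s :
  occupancy s = ((\row_j mu0 (enum_val j)) *m invmx IgPiP_mx) 0 (enum_rank s).
Proof.
by rewrite -occupancy_mulmx mulmxK ?IgPiP_mx_unit // mxE enum_rankK.
Qed.

End FixedPolicy.

Section ParametrizedPolicy.
Variables (k : nat) (pi : 'rV[R]_k -> S -> A -> R) (th : 'rV[R]_k).
Hypotheses (pi_ge0 : forall y s a, 0 <= pi y s a) (pi_sum1 : forall y s, \sum_a pi y s a = 1).
Hypothesis pi_diff : forall s a, differentiable (fun y => pi y s a) th.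

Lemma differentiable_PiOp v s : differentiable (fun y => PiOp (pi y) v s) th.
Proof.
apply: differentiable_big_sum => a _.
by apply: differentiableM => //; exact: differentiable_cst.
Qed.

Lemma differentiable_gPPi v s a : differentiable (fun y => gPPi gamma P (pi y) v s a) th.
Proof.
apply: differentiableM; first exact: differentiable_cst.
apply: differentiable_big_sum => s' _.
by apply: differentiableM; [exact: differentiable_cst | exact: differentiable_PiOp].
Qed.

Lemma differentiable_Jpi q : differentiable (fun y => Jpi gamma mu0 (pi y) q) th.
Proof.
apply: differentiableM; first exact: differentiable_cst.
apply: differentiable_big_sum => s _.
by apply: differentiableM; [exact: differentiable_cst | exact: differentiable_PiOp].
Qed.

Lemma differentiable_tdres r q s a :
  differentiable (fun y => tdres gamma P (pi y) r q s a) th.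
Proof.
apply: differentiableD; first exact: differentiable_cst.
apply: differentiableN; apply: differentiableD; first exact: differentiable_cst.
by apply: differentiableN; exact: differentiable_gPPi.
Qed.

Lemma differentiable_occupancy s : differentiable (fun y => occupancy (pi y) s) th.
Proof.
under eq_fun do rewrite (occupancy_invmx (pi_ge0 _) (pi_sum1 _)) mxE.
apply: differentiable_big_sum => i _; rewrite mxE.
apply: differentiableM; first exact: differentiable_cst.
apply: differentiable_invmx => [y|i' j']; first exact: IgPiP_mx_unit.
under eq_fun do rewrite !mxE.
apply: differentiableD; first exact: differentiable_cst.
apply: differentiableN; apply: differentiableM; first exact: differentiable_cst.
exact: (differentiable_PiOp (fun s a => P s a (enum_val j'))).
Qed.

Lemma differentiable_dvis s a : differentiable (fun y => dvis gamma mu0 P (pi y) s a) th.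
Proof.
under eq_fun do rewrite (dvisE (pi_ge0 _) (pi_sum1 _)).
apply: differentiableM; first exact: differentiable_cst.
by apply: differentiableM; [exact: pi_diff | exact: differentiable_occupancy].
Qed.

End ParametrizedPolicy.
End MDP.

Theorem mainTheorem4 (R : realType) (S A : finType) (k : nat)
  (P : S -> A -> S -> R) (r : S -> A -> R) (mu0 : S -> R) (gamma : R)
  (pi : 'rV[R]_k -> S -> A -> R) :
  (forall s a s', 0 <= P s a s') ->
  (forall s a, \sum_(s' : S) P s a s' = 1) ->
  (forall s, 0 < mu0 s) ->
  \sum_(s : S) mu0 s = 1 ->
  0 <= gamma -> gamma < 1 ->
  (forall th s a, 0 < pi th s a) ->
  (forall th s, \sum_(a : A) pi th s a = 1) ->
  (forall th s a, differentiable (fun th' => pi th' s a) th) ->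
  forall (th : 'rV[R]_k) (q : S -> A -> R),
  let d := fun th' => dvis gamma mu0 P (pi th') in
  let delta := fun th' => tdres gamma P (pi th') r q in
  (* partial_theta J_pi at fixed q *)
  let dJpi := fun i : 'I_k =>
    derive (fun th' => Jpi gamma mu0 (pi th') q) th (ebasis R i) in
  (* Jacobian in theta of -D_theta delta_theta at fixed q, entry (sa, i) *)
  let dthdqJq := fun (s : S) (a : A) (i : 'I_k) =>
    derive (fun th' => - (d th' s a * delta th' s a)) th (ebasis R i) in
  (* semi-Hessian D_theta = Delta(d_theta) (diagonal; its inverse is
     Delta(1/d_theta)); semi-derivative of J_pi is d_theta *)
  let gsemi := fun i : 'I_k =>
    dJpi i - \sum_(s : S) \sum_(a : A)
               dthdqJq s a i * ((d th s a)^-1 * d th s a) in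
  let Jtrue := fun th' =>
    (1 - gamma) * \sum_(s : S) mu0 s * PiOp (pi th') (qval gamma P (pi th') r) s in
  (forall i : 'I_k,
     gsemi i = dJpi i + derive (fun th' => \sum_(s : S) \sum_(a : A)
                                  d th' s a * delta th' s a) th (ebasis R i)) /\
  (forall i : 'I_k,
     dJpi i + derive (fun th' => \sum_(s : S) \sum_(a : A)
                        d th' s a * delta th' s a) th (ebasis R i)
     = derive Jtrue th (ebasis R i)).
Proof.
move=> P_ge0 P_sum1 mu0_gt0 mu0_sum1 gamma_ge0 gamma_lt1 pi_gt0 pi_sum1 pi_diff th q.
move=> d delta dJpi dthdqJq gsemi Jtrue.
have mu0_ge0 s : 0 <= mu0 s by exact: ltW.
have pi_ge0 y s a : 0 <= pi y s a by exact: ltW.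
have d_delta_diff s a : differentiable (fun y => d y s a * delta y s a) th.
  apply: differentiableM; last exact: differentiable_tdres.
  exact: differentiable_dvis.
have sum_d_delta_diff : differentiable (fun y => \sum_s \sum_a d y s a * delta y s a) th.
  by do 2 apply: differentiable_big_sum => ? _.
split=> i.
  rewrite /gsemi /dthdqJq derive_big_sum => [|s]; last first.
    by apply/diff_derivable/differentiable_big_sum => a _.
  rewrite -sumrN; congr (_ + _); apply: eq_bigr => s _.
  rewrite derive_big_sum -?sumrN => [|a]; last exact/diff_derivable.
  apply: eq_bigr => a _.
  have d_neq0 : d th s a != 0 by rewrite gt_eqF // (dvis_gt0 P_ge0 P_sum1 mu0_ge0).
  by rewrite mulVf // mulr1 deriveN ?opprK //; exact/diff_derivable.
have -> : Jtrue = fun y => Jpi gamma mu0 (pi y) q + \sum_s \sum_a d y s a * delta y s a.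
  by apply/funext => y; exact: (Jpi_qval P_ge0 P_sum1 mu0_ge0).
rewrite deriveD //; apply/diff_derivable => //.
exact: differentiable_Jpi.
Qed.
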